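(* Let $\mu>0$ and $\hbar>0$ be constants, and let $V:\mathbb{R}\to\mathbb{R}$ be a separable potential, i.e. there exist continuous real-valued functions $F$ and $G$ of one real variable such that $V\left(\frac{u+v}{2}\right)-V\left(\frac{u-v}{2}\right)=F(u)\,G(v)$ for all real $u,v$. Define, for real $u,u',v,v'$, $$\tilde{G}(v,v')=\int_{v'}^{v}G(v'')\,dv'',\qquad \tilde{F}(u,u')=\int_{u'}^{u}F(u'')\,du'',$$ and $$T_S(u,v)=\frac{u}{4}+\frac{\mu}{2\hbar^2}\int_{0}^{v}dv'\,G(v')\int_{0}^{u}du'\,F(u')\,\frac{u'}{4}\;{}_0F_1\!\left(;1;\frac{\mu}{2\hbar^2}\,\tilde{G}(v,v')\,\tilde{F}(u,u')\right).$$ Then $T_S$ satisfies the integral equation $$T_S(u,v)=\frac{u}{4}+\frac{\mu}{2\hbar^2}\int_{0}^{u}du'\int_{0}^{v}dv'\,F(u')\,G(v')\,T_S(u',v'),$$ and consequently the time kernel equation $$-\frac{2\hbar^2}{\mu}\frac{\partial^2 T_S(u,v)}{\partial u\,\partial v}+\left(V\left(\frac{u+v}{2}\right)-V\left(\frac{u-v}{2}\right)\right)T_S(u,v)=0$$ together with the boundary conditions $T_S(u,0)=u/4$ and $T_S(0,v)=0$.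
   Context: ${}_0F_1(;b;z)=\sum_{k=0}^{\infty}\frac{z^k}{(b)_k\,k!}$ denotes the confluent hypergeometric limit function, where $(b)_k$ is the Pochhammer symbol; in particular ${}_0F_1(;1;z)=\sum_{k\ge 0} z^k/(k!)^2$. The coordinates $u=q+q'$, $v=q-q'$ are the canonical coordinates in which the time kernel equation is written. *)

From Stdlib Require Import Reals Factorial.
From Coquelicot Require Import Coquelicot.
Open Scope R_scope.

Fixpoint pochhammer (b : R) (k : nat) : R :=
  match k with
  | O => 1
  | S k' => pochhammer b k' * (b + INR k')
  end.

Definition hyp0F1 (b z : R) : R :=
  Series (fun k => z ^ k / (pochhammer b k * INR (fact k))).

Definition tildeI (F : R -> R) (u u' : R) : R := RInt F u' u.

Definition T_S (mu hbar : R) (F G : R -> R) (u v : R) : R :=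
  u / 4 + mu / (2 * hbar ^ 2) *
    RInt (fun v' => G v' *
      RInt (fun u' => F u' * (u' / 4) *
              hyp0F1 1 (mu / (2 * hbar ^ 2) * tildeI G v v' * tildeI F u u'))
           0 u) 0 v.

From Stdlib Require Import Reals Lra Lia Factorial.
From Coquelicot Require Import Coquelicot.
Open Scope R_scope.

(* Write c = mu / (2 hbar^2) and A, B for the primitives [prim F], [prim G].  With
   [phi_coef 0 u = u / 4] and [phi_coef (k+1) u = (1 / (k+1)) int_0^u F (phi_coef k)], one has
   |phi_coef k| <= C D^k / k! on compact sets, so [phi u y = sum_k c^k (phi_coef k u) y^k] is
   entire in y.  Cauchy's formula for repeated integrals gives
   int_0^u F(t) (t/4) (A u - A t)^k dt = k! (k+1)! phi_coef (k+1) u; expanding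
   0F1(;1;z) = sum_k z^k / k!^2 term by term, c times the inner integral of T_S is therefore
   d(phi u)/dy at B v - B v', and the substitution y = B v - B v' yields T_S u v = phi u (B v).
   Termwise, d/du d/dy phi = c F phi and phi u y = u/4 + c int_0^u F(u') int_0^y phi(u', s) ds du';
   the substitution s = B v' turns these into the time kernel equation and the integral equation.
   Every termwise operation is justified by the Weierstrass M-test. *)

Lemma continuous_pow_fun (f : R -> R) (k : nat) (x : R) :
  continuous f x -> continuous (fun y => f y ^ k) x.
Proof.
  intros Hf; induction k as [|k IH]; simpl.
  - apply continuous_const.
  - exact (continuous_mult f _ x Hf IH).
Qed.

Ltac auto_cont :=
  repeat match goal with
  | |- continuous (fun _ => ?c) _ => apply continuous_const
  | |- continuous (fun y => y) _ => apply continuous_id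
  | |- continuous (fun y => @?f y * @?g y) _ => apply (continuous_mult f g)
  | |- continuous (fun y => @?f y + @?g y) _ => apply (continuous_plus f g)
  | |- continuous (fun y => @?f y - @?g y) _ => apply (continuous_minus f g)
  | |- continuous (fun y => - @?f y) _ => apply (continuous_opp f)
  | |- continuous (fun y => @?f y / ?c) _ => apply (continuous_mult f (fun _ => / c))
  | |- continuous (fun y => @?f y ^ ?k) _ => apply (continuous_pow_fun f k)
  end.

Lemma ex_RInt_cont (f : R -> R) (a b : R) :
  (forall x, continuous f x) -> ex_RInt f a b.
Proof. intros Hf; apply (ex_RInt_continuous (V := R_CompleteNormedModule)); auto. Qed.

Lemma RInt_mult_l (f : R -> R) (c a b : R) :
  ex_RInt f a b -> RInt (fun t => c * f t) a b = c * RInt f a b.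
Proof. exact (RInt_scal (V := R_CompleteNormedModule) f a b c). Qed.

Lemma RInt_antiderivative (f g : R -> R) (a b : R) :
  (forall x, is_derive g x (f x)) -> (forall x, continuous f x) ->
  RInt f a b = g b - g a.
Proof.
  intros Hg Hf.
  apply (is_RInt_unique (V := R_CompleteNormedModule)).
  apply (is_RInt_derive g f); auto.
Qed.

Lemma is_derive_RInt_upper (f : R -> R) (a x : R) :
  (forall y, continuous f y) -> is_derive (RInt f a) x (f x).
Proof.
  intros Hf; apply (is_derive_RInt f (RInt f a) a x); auto.
  apply filter_forall; intros y.
  apply (RInt_correct (V := R_CompleteNormedModule)), ex_RInt_cont; auto.
Qed.

Lemma continuous_RInt_upper (f : R -> R) (a x : R) :
  (forall y, continuous f y) -> continuous (RInt f a) x.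
Proof.
  intros Hf; apply (ex_derive_continuous (K := R_AbsRing) (V := R_NormedModule)).
  eexists; apply is_derive_RInt_upper, Hf.
Qed.

Lemma Rabs_le_segment (a x t r : R) :
  Rabs x <= r -> Rmin a x <= t <= Rmax a x -> Rabs t <= r + Rabs a.
Proof. unfold Rmin, Rmax; destruct (Rle_dec a x); split_Rabs; lra. Qed.

Lemma Rabs_RInt_le_const (f : R -> R) (a b M : R) :
  (forall t, continuous f t) ->
  (forall t, Rmin a b <= t <= Rmax a b -> Rabs (f t) <= M) ->
  Rabs (RInt f a b) <= Rabs (b - a) * M.
Proof.
  intros Hc Hb; destruct (Rle_dec a b) as [Hab|Hab].
  - rewrite (Rabs_pos_eq (b - a)) by lra.
    apply abs_RInt_le_const; auto using ex_RInt_cont.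
    intros t Ht; apply Hb; rewrite Rmin_left, Rmax_right; lra.
  - rewrite <- (opp_RInt_swap (V := R_CompleteNormedModule)) by auto using ex_RInt_cont.
    unfold opp; simpl; rewrite Rabs_Ropp, (Rabs_left (b - a)) by lra.
    replace (- (b - a)) with (a - b) by ring.
    apply abs_RInt_le_const; auto using ex_RInt_cont; try lra.
    intros t Ht; apply Hb; rewrite Rmin_right, Rmax_left; lra.
Qed.

Lemma bounded_on_ball (f : R -> R) (r : R) :
  (forall x, continuous f x) -> 0 <= r ->
  exists M, 0 <= M /\ forall x, Rabs x <= r -> Rabs (f x) <= M.
Proof.
  intros Hf Hr.
  destruct (continuity_ab_maj (fun x => Rabs (f x)) (- r) r) as [m [Hm _]]; [lra| |].
  - intros y _; apply continuity_pt_filterlim.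
    apply (continuous_comp f Rabs); auto using continuous_Rabs.
  - exists (Rabs (f m)); split; [apply Rabs_pos|].
    intros x Hx; apply Hm; split_Rabs; lra.
Qed.

Lemma continuity_2d_pt_fst (g : R -> R) (x y : R) :
  continuous g x -> continuity_2d_pt (fun u _ => g u) x y.
Proof.
  intros Hg; apply (continuity_1d_2d_pt_comp g (fun u _ => u)).
  - apply continuity_pt_filterlim, Hg.
  - apply continuity_2d_pt_id1.
Qed.

Lemma continuity_2d_pt_snd (g : R -> R) (x y : R) :
  continuous g y -> continuity_2d_pt (fun _ v => g v) x y.
Proof.
  intros Hg; apply (continuity_1d_2d_pt_comp g (fun _ v => v)).
  - apply continuity_pt_filterlim, Hg.
  - apply continuity_2d_pt_id2.
Qed.

Lemma is_derive_RInt_param_upper (f df : R -> R -> R) (x : R) :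
  (forall u t, is_derive (fun z => f z t) u (df u t)) ->
  (forall u t, continuity_2d_pt df u t) ->
  (forall u t, continuous (f u) t) ->
  is_derive (fun u => RInt (f u) 0 u) x (RInt (df x) 0 x + f x x).
Proof.
  intros Hd Hdc Hc.
  assert (HD : forall u t, Derive (fun z => f z t) u = df u t)
    by (intros; apply is_derive_unique, Hd).
  assert (HDc : forall u t, continuity_2d_pt (fun u v => Derive (fun z => f z v) u) u t)
    by (intros u t; apply (continuity_2d_pt_ext df); auto).
  assert (H := is_derive_RInt_param_bound_comp_aux3 f 0 (fun u => u) x 1).
  rewrite Rmult_1_r, (RInt_ext _ (df x)) in H by (intros; apply HD).
  apply H; clear H.
  - apply filter_forall; intros y; apply ex_RInt_cont, Hc.
  - exists (mkposreal 1 Rlt_0_1); apply filter_forall; intros y; apply ex_RInt_cont, Hc.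
  - apply (is_derive_id (K := R_AbsRing)).
  - exists (mkposreal 1 Rlt_0_1); apply filter_forall; intros y t _; eexists; apply Hd.
  - intros; apply HDc.
  - exists (mkposreal 1 Rlt_0_1); intros; apply HDc.
  - apply continuity_pt_filterlim, Hc.
Qed.

Lemma ex_series_exp (D : R) : ex_series (fun k => D ^ k / INR (fact k)).
Proof.
  exists (exp D); eapply is_series_ext; [|exact (is_exp_Reals D)].
  intros n; reflexivity.
Qed.

Lemma pochhammer_1 (k : nat) : pochhammer 1 k = INR (fact k).
Proof.
  induction k as [|k IH]; simpl pochhammer; [reflexivity|].
  rewrite IH, fact_simpl, mult_INR, S_INR; ring.
Qed.

Lemma INR_fact_ge_1 (k : nat) : 1 <= INR (fact k).
Proof. apply (le_INR 1), lt_O_fact. Qed.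

Lemma Rabs_pow_mul_le (c q C D : R) (k : nat) :
  Rabs q <= C * (D ^ k / INR (fact k)) ->
  Rabs (c ^ k * q) <= C * ((Rabs c * D) ^ k / INR (fact k)).
Proof.
  intros Hq; rewrite Rabs_mult, <- RPow_abs.
  replace (C * ((Rabs c * D) ^ k / INR (fact k)))
    with (Rabs c ^ k * (C * (D ^ k / INR (fact k))))
    by (rewrite Rpow_mult_distr; unfold Rdiv; ring).
  apply Rmult_le_compat_l; auto using pow_le, Rabs_pos.
Qed.

Lemma Rabs_pow_div_fact_sq_le (z Z : R) (k : nat) :
  Rabs z <= Z -> Rabs (z ^ k / (INR (fact k) * INR (fact k))) <= Z ^ k / INR (fact k).
Proof.
  intros Hz; pose proof (INR_fact_ge_1 k) as Hf.
  assert (Hzk : Rabs z ^ k <= Z ^ k) by (apply pow_incr; split; auto using Rabs_pos).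
  assert (0 <= Rabs z ^ k) by (apply pow_le, Rabs_pos).
  unfold Rdiv; rewrite Rabs_mult, <- RPow_abs, Rabs_inv, Rabs_mult,
    (Rabs_pos_eq (INR (fact k))), Rinv_mult, <- Rmult_assoc by lra.
  apply Rmult_le_compat_r; [left; apply Rinv_0_lt_compat; lra|].
  rewrite <- (Rmult_1_r (Z ^ k)); apply Rmult_le_compat; auto.
  - left; apply Rinv_0_lt_compat; lra.
  - rewrite <- Rinv_1; apply Rinv_le_contravar; lra.
Qed.

Lemma CV_radius_exp_bound (a : nat -> R) (C D : R) :
  (forall k, Rabs (a k) <= C * (D ^ k / INR (fact k))) ->
  forall x, Rbar_lt (Rabs x) (CV_radius a).
Proof.
  intros Ha x.
  apply Rbar_lt_le_trans with (Rabs x + 1); [simpl; lra|].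
  apply (Lub_Rbar_correct (CV_disk a)).
  apply (ex_series_le (K := R_AbsRing) (V := R_CompleteNormedModule) _
           (fun k => C * ((D * (Rabs x + 1)) ^ k / INR (fact k)))).
  - intros k; change norm with Rabs; simpl.
    rewrite Rabs_Rabsolu, Rabs_mult, <- RPow_abs, Rpow_mult_distr.
    rewrite (Rabs_pos_eq (Rabs x + 1)) by (pose proof (Rabs_pos x); lra).
    replace (C * (D ^ k * (Rabs x + 1) ^ k / INR (fact k)))
      with (C * (D ^ k / INR (fact k)) * (Rabs x + 1) ^ k) by (unfold Rdiv; ring).
    apply Rmult_le_compat_r; auto.
    apply pow_le; pose proof (Rabs_pos x); lra.
  - apply (ex_series_scal_l (V := R_NormedModule)), ex_series_exp.
Qed.

Definition locally_dominated (fn : nat -> R -> R) : Prop :=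
  forall r, 0 <= r -> exists M : nat -> R, ex_series M /\
    forall k x, Rabs x <= r -> Rabs (fn k x) <= M k.

Lemma locally_dominated_exp (fn : nat -> R -> R) :
  (forall r, 0 <= r -> exists C D,
     forall k x, Rabs x <= r -> Rabs (fn k x) <= C * (D ^ k / INR (fact k))) ->
  locally_dominated fn.
Proof.
  intros H r Hr; destruct (H r Hr) as [C [D HCD]].
  exists (fun k => C * (D ^ k / INR (fact k))); split; auto.
  apply (ex_series_scal_l (V := R_NormedModule)), ex_series_exp.
Qed.

Lemma locally_dominated_mult_l (g : R -> R) (fn : nat -> R -> R) :
  (forall x, continuous g x) -> locally_dominated fn ->
  locally_dominated (fun k x => g x * fn k x).
Proof.
  intros Hg Hfn r Hr.
  destruct (bounded_on_ball g r Hg Hr) as [Mg [_ HMg]].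
  destruct (Hfn r Hr) as [M [HM HMb]].
  exists (fun k => Mg * M k); split.
  - apply (ex_series_scal_l (V := R_NormedModule)); auto.
  - intros k x Hx; rewrite Rabs_mult.
    apply Rmult_le_compat; auto using Rabs_pos.
Qed.

Section WeierstrassMTest.

Variable fn : nat -> R -> R.
Hypothesis fn_dominated : locally_dominated fn.
Hypothesis fn_cont : forall k x, continuous (fn k) x.

Lemma ex_series_dominated (x : R) : ex_series (fun k => fn k x).
Proof.
  destruct (fn_dominated (Rabs x) (Rabs_pos x)) as [M [HM HMb]].
  apply (ex_series_le (K := R_AbsRing) (V := R_CompleteNormedModule) _ M); auto.
  intros k; apply HMb, Rle_refl.
Qed.

Lemma CVU_dominated (x : R) :
  exists e : posreal, CVU (SP fn) (fun y => Series (fun k => fn k y)) x e.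
Proof.
  assert (Hr : 0 < Rabs x + 1) by (pose proof (Rabs_pos x); lra).
  destruct (fn_dominated (Rabs x + 1) (Rlt_le _ _ Hr)) as [M [HM HMb]].
  assert (M_ge0 : forall k, 0 <= M k).
  { intros k; apply Rle_trans with (Rabs (fn k 0)); auto using Rabs_pos.
    apply HMb; rewrite Rabs_R0; lra. }
  apply (CVN_CVU_r fn (mkposreal _ Hr)); [|simpl; lra].
  exists M, (Series M); split.
  - intros eps Heps.
    destruct (proj1 (is_series_Reals M _) (Series_correct M HM) eps Heps) as [N HN].
    exists N; intros n Hn; unfold R_dist in *.
    rewrite (sum_eq _ M) by (intros; apply Rabs_pos_eq; auto).
    apply HN, Hn.
  - intros k y Hy; apply HMb; unfold Boule in Hy; simpl in Hy.
    rewrite Rminus_0_r in Hy; lra.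
Qed.

Lemma continuous_series (x : R) : continuous (fun y => Series (fun k => fn k y)) x.
Proof.
  destruct CVU_dominated with x as [e He].
  apply continuity_pt_filterlim; apply (CVU_continuity _ _ x e He).
  - intros n y _; apply continuity_pt_filterlim; unfold SP.
    induction n as [|n IH]; simpl; [apply fn_cont|].
    apply (continuous_plus (fun y => sum_f_R0 (fun k => fn k y) n)); auto.
  - unfold Boule; rewrite Rminus_diag, Rabs_R0; apply cond_pos.
Qed.

End WeierstrassMTest.

Lemma is_derive_series (fn dfn : nat -> R -> R) (x : R) :
  locally_dominated fn -> locally_dominated dfn ->
  (forall k y, is_derive (fn k) y (dfn k y)) ->
  (forall k y, continuous (dfn k) y) ->
  is_derive (fun y => Series (fun k => fn k y)) x (Series (fun k => dfn k x)).
Proof.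
  intros Hfn Hdfn Hd Hc.
  destruct (CVU_dominated dfn Hdfn x) as [e He].
  apply is_derive_Reals.
  apply (Ranalysis5.derivable_pt_lim_CVU (SP fn) (SP dfn)
           (fun y => Series (fun k => fn k y)) (fun y => Series (fun k => dfn k y)) x x e).
  - unfold Boule; rewrite Rminus_diag, Rabs_R0; apply cond_pos.
  - intros y n _; apply is_derive_Reals.
    unfold SP; induction n as [|n IH]; simpl; [apply Hd|].
    apply (is_derive_plus (fun y => sum_f_R0 (fun k => fn k y) n)); auto.
  - intros y _; apply is_series_Reals, Series_correct, ex_series_dominated, Hfn.
  - exact He.
  - intros y _; apply continuity_pt_filterlim, continuous_series; auto.
Qed.

Lemma RInt_series (fn : nat -> R -> R) (a b : R) :
  locally_dominated fn -> (forall k x, continuous (fn k) x) ->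
  RInt (fun x => Series (fun k => fn k x)) a b = Series (fun k => RInt (fn k) a b).
Proof.
  intros Hfn Hc.
  pose (antider k x := RInt (fn k) a x).
  assert (antider_dominated : locally_dominated antider).
  { intros r Hr.
    assert (Hra : 0 <= r + Rabs a) by (pose proof (Rabs_pos a); lra).
    destruct (Hfn _ Hra) as [M [HM HMb]].
    exists (fun k => (r + Rabs a) * M k); split.
    - apply (ex_series_scal_l (V := R_NormedModule)); auto.
    - intros k x Hx; eapply Rle_trans.
      + apply Rabs_RInt_le_const; auto.
        intros t Ht; apply HMb, (Rabs_le_segment a x t r Hx Ht).
      + apply Rmult_le_compat_r.
        * apply Rle_trans with (Rabs (fn k 0)); auto using Rabs_pos.
          apply HMb; rewrite Rabs_R0; auto.
        * unfold Rminus; eapply Rle_trans; [apply Rabs_triang|].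
          rewrite Rabs_Ropp; lra. }
  rewrite (RInt_antiderivative _ (fun y => Series (fun k => antider k y))).
  - rewrite <- Series_minus by (apply ex_series_dominated; auto).
    apply Series_ext; intros k; unfold antider; rewrite RInt_point.
    unfold zero; simpl; ring.
  - intros x; apply is_derive_series; auto.
    intros k y; apply is_derive_RInt_upper, Hc.
  - intros x; apply continuous_series; auto.
Qed.

Section Primitive.

Variable F : R -> R.
Hypothesis F_cont : forall x, continuous F x.

Definition prim (u : R) : R := RInt F 0 u.

Lemma is_derive_prim (x : R) : is_derive prim x (F x).
Proof. exact (is_derive_RInt_upper F 0 x F_cont). Qed.

Lemma continuous_prim (x : R) : continuous prim x.
Proof.
  apply (ex_derive_continuous (K := R_AbsRing) (V := R_NormedModule)).
  eexists; apply is_derive_prim.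
Qed.

Lemma prim_0 : prim 0 = 0.
Proof. exact (RInt_point (V := R_CompleteNormedModule) 0 F). Qed.

Lemma RInt_eq_prim_sub (a b : R) : RInt F a b = prim b - prim a.
Proof. apply RInt_antiderivative; [apply is_derive_prim | apply F_cont]. Qed.

Lemma RInt_subst_prim (f : R -> R) (v : R) :
  (forall x, continuous f x) ->
  RInt (fun t => F t * f (prim t)) 0 v = RInt f 0 (prim v).
Proof.
  intros Hf; rewrite <- prim_0 at 2.
  apply (RInt_comp (V := R_CompleteNormedModule) f prim F 0 v); auto.
  intros; split; [apply is_derive_prim | apply F_cont].
Qed.

Lemma RInt_subst_prim_rev (f : R -> R) (v : R) :
  (forall x, continuous f x) ->
  RInt (fun t => F t * f (prim v - prim t)) 0 v = RInt f 0 (prim v).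
Proof.
  intros Hf.
  assert (H : RInt (fun t => scal (- F t) (f (prim v - prim t))) 0 v
              = RInt f (prim v - prim 0) (prim v - prim v)).
  { apply (RInt_comp (V := R_CompleteNormedModule) f (fun t => prim v - prim t) (fun t => - F t)); auto.
    intros t _; split; [|apply (continuous_opp F), F_cont].
    assert (Hd : is_derive (fun t => prim v - prim t) t (0 - F t)).
    { apply (is_derive_minus (fun _ => prim v) prim);
        [apply (is_derive_const (K := R_AbsRing) (V := R_NormedModule)) | apply is_derive_prim]. }
    rewrite Rminus_0_l in Hd; exact Hd. }
  rewrite prim_0, Rminus_0_r, Rminus_diag in H.
  rewrite <- (opp_RInt_swap (V := R_CompleteNormedModule) f) in H by (apply ex_RInt_cont; auto).
  rewrite (RInt_ext _ (fun t => -1 * (F t * f (prim v - prim t)))) in H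
    by (intros; change scal with Rmult; simpl; ring).
  rewrite RInt_mult_l in H.
  2:{ apply ex_RInt_cont; intros x; apply (continuous_mult F); auto.
      apply (continuous_comp (fun t => prim v - prim t) f); auto.
      auto_cont; apply continuous_prim. }
  unfold opp in H; simpl in H; lra.
Qed.

End Primitive.

Section Coefficients.

Variables F w : R -> R.
Hypothesis F_cont : forall x, continuous F x.
Hypothesis w_cont : forall x, continuous w x.

Fixpoint phi_coef (k : nat) (u : R) : R :=
  match k with
  | O => w u
  | S j => RInt (fun t => F t * phi_coef j t) 0 u / INR (S j)
  end.

Lemma continuous_phi_coef (k : nat) (x : R) : continuous (phi_coef k) x.
Proof.
  revert x; induction k as [|k IH]; intros x; simpl; [apply w_cont|].
  apply (continuous_mult (RInt (fun t => F t * phi_coef k t) 0) (fun _ => / INR (S k)));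
    [|apply continuous_const].
  apply continuous_RInt_upper; intros y; apply (continuous_mult F); auto.
Qed.

Lemma RInt_F_phi_coef (k : nat) (u : R) :
  RInt (fun t => F t * phi_coef k t) 0 u = INR (S k) * phi_coef (S k) u.
Proof.
  simpl phi_coef; unfold Rdiv.
  rewrite Rmult_comm, Rmult_assoc, Rinv_l, Rmult_1_r by (apply not_0_INR; lia).
  reflexivity.
Qed.

Lemma phi_coef_at_0 (k : nat) : w 0 = 0 -> phi_coef k 0 = 0.
Proof.
  intros w0; destruct k as [|k]; simpl phi_coef; auto.
  rewrite RInt_point; apply Rmult_0_l.
Qed.

Lemma phi_coef_bound (r : R) : 0 <= r ->
  exists C D, forall k x, Rabs x <= r -> Rabs (phi_coef k x) <= C * (D ^ k / INR (fact k)).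
Proof.
  intros Hr.
  destruct (bounded_on_ball w r w_cont Hr) as [MW [MW_ge0 HMW]].
  destruct (bounded_on_ball F r F_cont Hr) as [MF [MF_ge0 HMF]].
  exists MW, (MF * r); intros k; induction k as [|k IH]; intros x Hx.
  - simpl; rewrite Rdiv_1_r, Rmult_1_r; auto.
  - set (M := MW * ((MF * r) ^ k / INR (fact k))).
    assert (0 < INR (S k)) by (apply lt_0_INR; lia).
    assert (0 < INR (fact k)) by (apply lt_0_INR, lt_O_fact).
    assert (M_ge0 : 0 <= M)
      by (apply Rmult_le_pos, Rdiv_le_0_compat; auto using pow_le, Rmult_le_pos).
    assert (HI : Rabs (RInt (fun t => F t * phi_coef k t) 0 x) <= Rabs (x - 0) * (MF * M)).
    { apply Rabs_RInt_le_const.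
      - intros t; apply (continuous_mult F (phi_coef k)); auto using continuous_phi_coef.
      - intros t Ht; assert (Htr := Rabs_le_segment 0 x t r Hx Ht); rewrite Rabs_R0 in Htr.
        rewrite Rabs_mult; apply Rmult_le_compat; auto using Rabs_pos; [apply HMF | apply IH]; lra. }
    change (phi_coef (S k) x) with (RInt (fun t => F t * phi_coef k t) 0 x / INR (S k)).
    rewrite Rabs_div, (Rabs_pos_eq (INR (S k))), Rminus_0_r in * by lra.
    apply Rle_trans with (r * (MF * M) / INR (S k)).
    + apply Rmult_le_compat_r; [left; apply Rinv_0_lt_compat; lra|].
      eapply Rle_trans; [exact HI|].
      apply Rmult_le_compat_r; auto using Rmult_le_pos.
    + right; unfold M; rewrite fact_simpl, mult_INR; simpl pow; field; lra.
Qed.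

Definition cauchy_int (k : nat) (u : R) : R :=
  RInt (fun t => F t * w t * (prim F u - prim F t) ^ k) 0 u.

Lemma cauchy_int_at_0 (k : nat) : cauchy_int k 0 = 0.
Proof. exact (RInt_point (V := R_CompleteNormedModule) 0 _). Qed.

Lemma is_derive_cauchy_int_S (k : nat) (x : R) :
  is_derive (cauchy_int (S k)) x (INR (S k) * F x * cauchy_int k x).
Proof.
  assert (Hdiff : forall t u, is_derive (fun z => prim F z - prim F t) u (F u)).
  { intros t u; rewrite <- (Rminus_0_r (F u)).
    apply (is_derive_minus (prim F) (fun _ => prim F t));
      [apply is_derive_prim, F_cont | apply (is_derive_const (K := R_AbsRing) (V := R_NormedModule))]. }
  assert (H := is_derive_RInt_param_upper
                 (fun u t => F t * w t * (prim F u - prim F t) ^ S k)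
                 (fun u t => F t * w t * (INR (S k) * F u * (prim F u - prim F t) ^ k)) x).
  cbv beta in H; rewrite Rminus_diag, pow_ne_zero, Rmult_0_r, Rplus_0_r in H by lia.
  rewrite (RInt_ext _ (fun t => INR (S k) * F x * (F t * w t * (prim F x - prim F t) ^ k))) in H.
  2:{ intros; cbn -[pow INR prim]; ring. }
  rewrite RInt_mult_l in H by (apply ex_RInt_cont; intros; auto_cont; auto using continuous_prim).
  apply H; clear H.
  - intros u t; apply is_derive_scal.
    apply (is_derive_pow (fun z => prim F z - prim F t) (S k) u (F u)), Hdiff.
  - intros u t.
    assert (Hdiff2 : continuity_2d_pt (fun u t => prim F u - prim F t) u t).
    { apply (continuity_2d_pt_minus (fun u _ => prim F u) (fun _ t => prim F t));
        [apply continuity_2d_pt_fst | apply continuity_2d_pt_snd]; apply continuous_prim, F_cont. }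
    apply continuity_2d_pt_mult.
    { apply (continuity_2d_pt_snd (fun t => F t * w t)); auto_cont; auto. }
    apply continuity_2d_pt_mult.
    { apply (continuity_2d_pt_fst (fun u => INR (S k) * F u)); auto_cont; auto. }
    apply (continuity_1d_2d_pt_comp (fun z => z ^ k)); auto.
    apply continuity_pt_filterlim, (continuous_pow_fun (fun z => z)), continuous_id.
  - intros u t; auto_cont; auto using continuous_prim.
Qed.

Lemma cauchy_int_eq (k : nat) (u : R) :
  cauchy_int k u = INR (fact k) * INR (fact (S k)) * phi_coef (S k) u.
Proof.
  revert u; induction k as [|k IH]; intros u.
  - transitivity (INR 1 * phi_coef 1 u); [|simpl; ring].
    rewrite <- RInt_F_phi_coef; apply RInt_ext; intros; cbn -[prim]; ring.
  - set (K := INR (S k) * (INR (fact k) * INR (fact (S k)))).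
    rewrite <- (Rminus_0_r (cauchy_int (S k) u)), <- (cauchy_int_at_0 (S k)).
    rewrite <- (RInt_antiderivative (fun t => K * (F t * phi_coef (S k) t))).
    + rewrite RInt_mult_l, RInt_F_phi_coef.
      * unfold K; rewrite !fact_simpl, !mult_INR; ring.
      * apply ex_RInt_cont; intros; apply (continuous_mult F (phi_coef (S k)));
          auto using continuous_phi_coef.
    + intros x; replace (K * (F x * phi_coef (S k) x)) with (INR (S k) * F x * cauchy_int k x)
        by (rewrite IH; unfold K; ring).
      apply is_derive_cauchy_int_S.
    + intros x; apply (continuous_mult (fun _ => K)); [apply continuous_const|].
      apply (continuous_mult F (phi_coef (S k))); auto using continuous_phi_coef.
Qed.

End Coefficients.

Section PowerSeries.

Variables F w : R -> R.
Hypothesis F_cont : forall x, continuous F x.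
Hypothesis w_cont : forall x, continuous w x.
Variable c : R.

Definition phi_seq (u : R) (k : nat) : R := c ^ k * phi_coef F w k u.

Definition phi (u y : R) : R := PSeries (phi_seq u) y.

Definition dphi (u y : R) : R := PSeries (PS_derive (phi_seq u)) y.

Lemma CV_radius_phi_seq (u x : R) : Rbar_lt (Rabs x) (CV_radius (phi_seq u)).
Proof.
  destruct (phi_coef_bound F w F_cont w_cont (Rabs u) (Rabs_pos u)) as [C [D HCD]].
  apply (CV_radius_exp_bound _ C (Rabs c * D)); intros k.
  apply Rabs_pow_mul_le, HCD, Rle_refl.
Qed.

Lemma is_derive_phi (u y : R) : is_derive (phi u) y (dphi u y).
Proof. apply is_derive_PSeries, CV_radius_phi_seq. Qed.

Lemma continuous_phi (u y : R) : continuous (phi u) y.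
Proof.
  apply (ex_derive_continuous (K := R_AbsRing) (V := R_NormedModule)).
  eexists; apply is_derive_phi.
Qed.

Lemma continuous_dphi (u y : R) : continuous (dphi u) y.
Proof.
  apply continuity_pt_filterlim, PSeries_continuity.
  rewrite CV_radius_derive; apply CV_radius_phi_seq.
Qed.

Lemma phi_at_y0 (u : R) : phi u 0 = w u.
Proof. unfold phi; rewrite PSeries_0; unfold phi_seq; simpl; ring. Qed.

Lemma phi_at_u0 (y : R) : w 0 = 0 -> phi 0 y = 0.
Proof.
  intros w0; transitivity (PSeries (fun _ => 0) y); [|apply PSeries_const_0].
  apply PSeries_ext; intros k.
  unfold phi_seq; rewrite phi_coef_at_0; auto; ring.
Qed.

Lemma RInt_dphi (u y : R) : RInt (dphi u) 0 y = phi u y - w u.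
Proof.
  rewrite <- (phi_at_y0 u).
  apply RInt_antiderivative; [apply is_derive_phi | apply continuous_dphi].
Qed.

Lemma phi_series_dominated (b : nat -> R) (B E : R) :
  (forall k, Rabs (b k) <= B * E ^ k) ->
  locally_dominated (fun k t => phi_seq t k * b k).
Proof.
  intros Hb; apply locally_dominated_exp; intros r Hr.
  destruct (phi_coef_bound F w F_cont w_cont r Hr) as [C [D HCD]].
  exists (C * B), (Rabs c * D * E); intros k t Ht.
  rewrite Rabs_mult, Rpow_mult_distr.
  replace (C * B * ((Rabs c * D) ^ k * E ^ k / INR (fact k)))
    with (C * ((Rabs c * D) ^ k / INR (fact k)) * (B * E ^ k)) by (unfold Rdiv; ring).
  apply Rmult_le_compat; auto using Rabs_pos.
  apply Rabs_pow_mul_le, HCD, Ht.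
Qed.

Lemma continuous_phi_seq_term (b : nat -> R) (k : nat) (x : R) :
  continuous (fun t => phi_seq t k * b k) x.
Proof.
  unfold phi_seq; auto_cont.
  apply continuous_phi_coef; auto.
Qed.

Lemma RInt_F_phi_series (b : nat -> R) (B E u : R) :
  (forall k, Rabs (b k) <= B * E ^ k) ->
  RInt (fun t => F t * Series (fun k => phi_seq t k * b k)) 0 u
  = Series (fun k => c ^ k * b k * (INR (S k) * phi_coef F w (S k) u)).
Proof.
  intros Hb.
  rewrite (RInt_ext _ (fun t => Series (fun k => F t * (phi_seq t k * b k))))
    by (intros; rewrite Series_scal_l; reflexivity).
  rewrite RInt_series.
  - apply Series_ext; intros k; unfold phi_seq.
    rewrite <- RInt_F_phi_coef, <- RInt_mult_l; auto.
    + apply RInt_ext; intros; cbn -[pow phi_coef]; ring.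
    + apply ex_RInt_cont; intros; apply (continuous_mult F); auto using continuous_phi_coef.
  - apply locally_dominated_mult_l; auto.
    apply (phi_series_dominated b B E Hb).
  - intros k x; apply (continuous_mult F); auto using continuous_phi_seq_term.
Qed.

Lemma continuous_phi_u (y x : R) : continuous (fun t => phi t y) x.
Proof.
  unfold phi, PSeries.
  apply (continuous_series (fun k t => phi_seq t k * y ^ k)).
  - apply (phi_series_dominated _ 1 (Rabs y)); intros k; rewrite RPow_abs; lra.
  - intros k; apply continuous_phi_seq_term.
Qed.

Lemma dphi_eq_RInt (u y : R) : dphi u y = c * RInt (fun t => F t * phi t y) 0 u.
Proof.
  rewrite (RInt_ext _ (fun t => F t * Series (fun k => phi_seq t k * y ^ k)))
    by (intros; reflexivity).
  rewrite (RInt_F_phi_series _ 1 (Rabs y)) by (intros k; rewrite RPow_abs; lra).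
  unfold dphi, PSeries; rewrite <- Series_scal_l; apply Series_ext; intros k.
  unfold PS_derive, phi_seq; simpl pow; ring.
Qed.

Lemma is_derive_dphi_u (u y : R) : is_derive (fun t => dphi t y) u (c * (F u * phi u y)).
Proof.
  apply (is_derive_ext (fun t => c * RInt (fun s => F s * phi s y) 0 t)).
  { intros t; symmetry; apply dphi_eq_RInt. }
  apply is_derive_scal, (is_derive_RInt_upper (fun s => F s * phi s y)).
  intros x; apply (continuous_mult F); auto using continuous_phi_u.
Qed.

Lemma RInt_phi_y (u y : R) :
  RInt (phi u) 0 y = Series (fun k => phi_seq u k * (y ^ S k / INR (S k))).
Proof.
  unfold phi; rewrite RInt_PSeries by apply CV_radius_phi_seq.
  rewrite (PSeries_ext _ (PS_incr_1 (fun k => phi_seq u k / INR (S k))))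
    by (intros [|k]; reflexivity).
  rewrite PSeries_incr_1; unfold PSeries; rewrite <- Series_scal_l.
  apply Series_ext; intros k; change (y ^ S k) with (y * y ^ k); unfold Rdiv; ring.
Qed.

Lemma phi_integral_eq (u y : R) :
  phi u y = w u + c * RInt (fun t => F t * RInt (phi t) 0 y) 0 u.
Proof.
  rewrite (RInt_ext _ (fun t => F t * Series (fun k => phi_seq t k * (y ^ S k / INR (S k)))))
    by (intros; rewrite RInt_phi_y; reflexivity).
  rewrite (RInt_F_phi_series _ (Rabs y) (Rabs y)).
  2:{ intros k; unfold Rdiv.
      rewrite Rabs_mult, Rabs_inv, <- RPow_abs, (Rabs_pos_eq (INR (S k))) by apply pos_INR.
      change (Rabs y ^ S k) with (Rabs y * Rabs y ^ k).
      rewrite <- (Rmult_1_r (Rabs y * Rabs y ^ k)) at 2.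
      apply Rmult_le_compat_l; [apply Rmult_le_pos; auto using Rabs_pos, pow_le, Rabs_pos|].
      rewrite <- Rinv_1; apply Rinv_le_contravar; [lra|].
      rewrite S_INR; pose proof (pos_INR k); lra. }
  unfold phi; rewrite PSeries_decr_1 by (apply CV_radius_inside, CV_radius_phi_seq).
  unfold PSeries, PS_decr_1; rewrite <- !Series_scal_l.
  f_equal; [unfold phi_seq; simpl; ring|].
  apply Series_ext; intros k; unfold phi_seq.
  change (c ^ S k) with (c * c ^ k); change (y ^ S k) with (y * y ^ k).
  field; apply not_0_INR; lia.
Qed.

Lemma RInt_hyp0F1_eq_dphi (u X : R) :
  c * RInt (fun t => F t * w t * hyp0F1 1 (c * X * (prim F u - prim F t))) 0 u = dphi u X.
Proof.
  set (z t := c * X * (prim F u - prim F t)).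
  unfold hyp0F1.
  rewrite (RInt_ext _ (fun t => Series (fun k =>
             F t * w t * (z t ^ k / (pochhammer 1 k * INR (fact k))))))
    by (intros; rewrite Series_scal_l; reflexivity).
  rewrite RInt_series.
  - unfold dphi, PSeries; rewrite <- Series_scal_l; apply Series_ext; intros k.
    rewrite (RInt_ext _ (fun t => (c * X) ^ k / (pochhammer 1 k * INR (fact k))
                                  * (F t * w t * (prim F u - prim F t) ^ k))).
    2:{ intros; unfold z; rewrite Rpow_mult_distr; unfold Rdiv; cbn -[pow pochhammer fact INR prim]; ring. }
    rewrite RInt_mult_l by (apply ex_RInt_cont; intros; auto_cont; auto using continuous_prim).
    change (RInt _ 0 u) with (cauchy_int F w k u).
    rewrite cauchy_int_eq, pochhammer_1; auto.
    unfold PS_derive, phi_seq; rewrite fact_simpl, mult_INR, Rpow_mult_distr.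
    change (c ^ S k) with (c * c ^ k).
    assert (0 < INR (fact k)) by (apply lt_0_INR, lt_O_fact).
    field; lra.
  - apply (locally_dominated_mult_l (fun t => F t * w t)); [intros; auto_cont; auto|].
    apply locally_dominated_exp; intros r Hr.
    destruct (bounded_on_ball (prim F) r (continuous_prim F F_cont) Hr) as [MA [_ HMA]].
    exists 1, (Rabs (c * X) * (Rabs (prim F u) + MA)); intros k t Ht.
    rewrite pochhammer_1, Rmult_1_l; apply Rabs_pow_div_fact_sq_le.
    unfold z; rewrite Rabs_mult; apply Rmult_le_compat_l; [apply Rabs_pos|].
    unfold Rminus; eapply Rle_trans; [apply Rabs_triang|].
    rewrite Rabs_Ropp; specialize (HMA t Ht); lra.
  - intros k x; unfold z; auto_cont; auto using continuous_prim.
Qed.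

End PowerSeries.

Section GoursatProblem.

Variables F G w : R -> R.
Hypothesis F_cont : forall x, continuous F x.
Hypothesis G_cont : forall x, continuous G x.
Hypothesis w_cont : forall x, continuous w x.
Variable c : R.

Definition goursat_sol (u v : R) : R := phi F w c u (prim G v).

Lemma goursat_sol_integral_eq (u v : R) :
  goursat_sol u v
  = w u + c * RInt (fun s => RInt (fun t => F s * G t * goursat_sol s t) 0 v) 0 u.
Proof.
  unfold goursat_sol; rewrite phi_integral_eq; auto.
  do 2 f_equal; apply RInt_ext; intros s _.
  rewrite <- (RInt_subst_prim G) by auto using continuous_phi.
  rewrite <- RInt_mult_l.
  - apply RInt_ext; intros; cbn -[phi prim]; ring.
  - apply ex_RInt_cont; intros x; apply (continuous_mult G); auto.
    apply (continuous_comp (prim G)); auto using continuous_prim, continuous_phi.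
Qed.

Lemma is_derive_goursat_sol_v (u v : R) :
  is_derive (goursat_sol u) v (G v * dphi F w c u (prim G v)).
Proof.
  apply (is_derive_comp (phi F w c u) (prim G));
    [apply is_derive_phi | apply is_derive_prim]; auto.
Qed.

Lemma is_derive_goursat_sol_uv (u v : R) :
  is_derive (fun s => Derive (goursat_sol s) v) u (c * F u * G v * goursat_sol u v).
Proof.
  apply (is_derive_ext (fun s => G v * dphi F w c s (prim G v))).
  { intros s; symmetry; apply is_derive_unique, is_derive_goursat_sol_v. }
  replace (c * F u * G v * goursat_sol u v) with (G v * (c * (F u * phi F w c u (prim G v))))
    by (unfold goursat_sol; ring).
  apply is_derive_scal, is_derive_dphi_u; auto.
Qed.

Lemma goursat_sol_v0 (u : R) : goursat_sol u 0 = w u.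
Proof. unfold goursat_sol; rewrite prim_0; apply phi_at_y0. Qed.

Lemma goursat_sol_u0 (v : R) : w 0 = 0 -> goursat_sol 0 v = 0.
Proof. intros w0; apply phi_at_u0; auto. Qed.

End GoursatProblem.

Lemma T_S_eq_goursat_sol (mu hbar : R) (F G : R -> R) (u v : R) :
  (forall x, continuous F x) -> (forall x, continuous G x) -> mu / (2 * hbar ^ 2) <> 0 ->
  T_S mu hbar F G u v = goursat_sol F G (fun t => t / 4) (mu / (2 * hbar ^ 2)) u v.
Proof.
  intros HF HG Hc; set (c := mu / (2 * hbar ^ 2)) in *; set (w := fun t : R => t / 4).
  assert (w_cont : forall x, continuous w x) by (intros; unfold w; auto_cont).
  unfold T_S, goursat_sol; fold c.
  rewrite (RInt_ext _ (fun t => / c * (G t * dphi F w c u (prim G v - prim G t)))).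
  2:{ intros t _; rewrite <- (RInt_hyp0F1_eq_dphi F w HF w_cont c u).
      unfold tildeI; rewrite (RInt_eq_prim_sub G HG).
      rewrite (RInt_ext _ (fun s => F s * w s * hyp0F1 1 (c * (prim G v - prim G t) * (prim F u - prim F s))))
        by (intros; rewrite RInt_eq_prim_sub; auto).
      cbn -[RInt prim dphi hyp0F1]; field; auto. }
  rewrite RInt_mult_l, RInt_subst_prim_rev, RInt_dphi; auto using continuous_dphi.
  - unfold w; field; auto.
  - apply ex_RInt_cont; intros x; apply (continuous_mult G); auto.
    apply (continuous_comp (fun t => prim G v - prim G t)); auto using continuous_dphi.
    auto_cont; apply continuous_prim; auto.
Qed.

Theorem mainTheorem1 (mu hbar : R) (V F G : R -> R) :
  0 < mu -> 0 < hbar ->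
  (forall x, continuous F x) -> (forall x, continuous G x) ->
  (forall u v, V ((u + v) / 2) - V ((u - v) / 2) = F u * G v) ->
  let T := T_S mu hbar F G in
  (* integral equation *)
  (forall u v,
     T u v = u / 4 + mu / (2 * hbar ^ 2) *
       RInt (fun u' => RInt (fun v' => F u' * G v' * T u' v') 0 v) 0 u) /\
  (* time kernel equation: mixed partial derivative d/du (d/dv T) exists and *)
  (forall u v,
     ex_derive (fun v' => T u v') v /\
     exists d : R,
       is_derive (fun u' => Derive (fun v' => T u' v') v) u d /\
       - (2 * hbar ^ 2 / mu) * d
         + (V ((u + v) / 2) - V ((u - v) / 2)) * T u v = 0) /\
  (* boundary conditions *)
  (forall u, T u 0 = u / 4) /\
  (forall v, T 0 v = 0).
Proof.
  intros Hmu Hh HF HG HV T.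
  assert (Hh2 : 0 < 2 * hbar ^ 2) by (apply Rmult_lt_0_compat, pow_lt; lra).
  assert (Hc : mu / (2 * hbar ^ 2) <> 0) by (apply Rgt_not_eq, Rdiv_lt_0_compat; lra).
  set (c := mu / (2 * hbar ^ 2)) in *; set (w := fun t : R => t / 4).
  assert (HT : forall u v, T u v = goursat_sol F G w c u v)
    by (intros; apply T_S_eq_goursat_sol; auto).
  assert (w_cont : forall x, continuous w x) by (intros; unfold w; auto_cont).
  split; [|split; [|split]].
  - intros u v; rewrite HT, goursat_sol_integral_eq; auto.
    do 2 f_equal; apply RInt_ext; intros; apply RInt_ext; intros; rewrite HT; reflexivity.
  - intros u v; split.
    + exists (G v * dphi F w c u (prim G v)).
      apply (is_derive_ext (goursat_sol F G w c u)); [intros; symmetry; apply HT|].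
      apply is_derive_goursat_sol_v; auto.
    + exists (c * F u * G v * T u v); split.
      * apply (is_derive_ext (fun s => Derive (goursat_sol F G w c s) v)).
        { intros s; apply Derive_ext; intros; symmetry; apply HT. }
        rewrite HT; apply is_derive_goursat_sol_uv; auto.
      * rewrite HV; unfold c; field; lra.
  - intros u; rewrite HT; apply (goursat_sol_v0 F G w c).
  - intros v; rewrite HT; apply goursat_sol_u0; unfold w; lra.
Qed.
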